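(* Let $d\ge 3$ be an integer and $\beta>0$. For real numbers $\mu_{++},\rho_+$ set $\rho_-=1-\rho_+$, $\mu_{+-}=\rho_+-\mu_{++}$, $\mu_{--}=1+\mu_{++}-2\rho_+$, let $\mathcal{Q}=\{(\mu_{++},\rho_+):\mu_{++}>0,\mu_{+-}>0,\mu_{--}>0\}$ and \[ \psi(\mu_{++},\rho_+)=-\rho_+\log\rho_+-\rho_-\log\rho_- -\frac d2\left(\mu_{++}\log\frac{\mu_{++}}{\rho_+^2}+\mu_{--}\log\frac{\mu_{--}}{\rho_-^2}+2\mu_{+-}\log\frac{\mu_{+-}}{\rho_+\rho_-}+\beta(1+2\mu_{++}-2\rho_+)\right). \] Then \[ \max_{(\mu_{++},\rho_+)\in\mathcal{Q}}\psi(\mu_{++},\rho_+)=\psi\left(\frac{e^{-\beta}}{2(1+e^{-\beta})},\frac12\right)=\left(1-\frac d2\right)\log 2+\frac d2\log(1+e^{-\beta}). \] *)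

From Stdlib Require Export Reals.
Open Scope R_scope.

Definition rho_minus (rp : R) : R := 1 - rp.
Definition mu_pm (mpp rp : R) : R := rp - mpp.
Definition mu_mm (mpp rp : R) : R := 1 + mpp - 2 * rp.

Definition inQ (mpp rp : R) : Prop :=
  0 < mpp /\ 0 < mu_pm mpp rp /\ 0 < mu_mm mpp rp.

Definition psi (d : nat) (beta mpp rp : R) : R :=
  let rm := rho_minus rp in
  let mpm := mu_pm mpp rp in
  let mmm := mu_mm mpp rp in
  - rp * ln rp - rm * ln rm
  - INR d / 2 *
      (mpp * ln (mpp / rp ^ 2) + mmm * ln (mmm / rm ^ 2)
       + 2 * mpm * ln (mpm / (rp * rm))
       + beta * (1 + 2 * mpp - 2 * rp)).

(** The site and bond marginals of the configuration make [psi] the negative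
    of a combination of two relative entropies: [rho_+ ln rho_+ + rho_- ln rho_-]
    against the uniform weights, and the bond distribution
    [(mu_++, 2 mu_+-, mu_--)] against the Boltzmann weights
    [(e^-beta rho_+^2, 2 rho_+ rho_-, e^-beta rho_-^2)], whose total mass is at
    most [(1 + e^-beta)/2] because [rho_+ rho_- <= 1/4].  Gibbs' inequality
    bounds the two entropies below by [-ln 2] and [-ln ((1 + e^-beta)/2)], and at
    the symmetric point both bounds are attained, since there every ratio of a
    probability to its weight is the same constant. *)

From Stdlib Require Import Reals Lra List.
Import ListNotations.
Open Scope R_scope.

Lemma ln_div (x y : R) : 0 < x -> 0 < y -> ln (x / y) = ln x - ln y.
Proof.
  intros hx hy. unfold Rdiv.
  rewrite ln_mult, ln_Rinv by (try apply Rinv_0_lt_compat; lra). ring.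
Qed.

Lemma exp_opp_le_1 (x : R) : 0 <= x -> exp (- x) <= 1.
Proof.
  intros hx. rewrite <- exp_0. destruct (Req_dec x 0) as [-> | hx0].
  - rewrite Ropp_0. lra.
  - left. apply exp_increasing. lra.
Qed.

Lemma sub_le_mul_ln_div (x y : R) : 0 < x -> 0 < y -> x - y <= x * ln (x / y).
Proof.
  intros hx hy.
  assert (hexp := exp_ineq1_le (ln (y / x))).
  rewrite exp_ln in hexp by (apply Rdiv_lt_0_compat; lra).
  rewrite ln_div in hexp by lra. rewrite ln_div by lra.
  apply Rmult_le_compat_l with (r := x) in hexp; [|lra].
  replace (x * (y / x)) with y in hexp by (field; lra). lra.
Qed.

Definition sum_list (l : list R) : R := fold_right Rplus 0 l.

Definition rel_entropy (l : list (R * R)) : R :=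
  sum_list (map (fun '(x, y) => x * ln (x / y)) l).

Definition positive_pairs (l : list (R * R)) : Prop :=
  Forall (fun '(x, y) => 0 < x /\ 0 < y) l.

(* Termwise, [x - y / s <= x ln (x s / y)]. *)
Lemma rel_entropy_ge (l : list (R * R)) (s : R) :
  0 < s -> positive_pairs l ->
  sum_list (map fst l) * (1 - ln s) - sum_list (map snd l) / s <= rel_entropy l.
Proof.
  intros hs hl. unfold rel_entropy, sum_list.
  induction hl as [|[x y] l [hx hy] _ IH]; simpl.
  - unfold Rdiv. lra.
  - assert (hterm := sub_le_mul_ln_div x (y / s) hx ltac:(apply Rdiv_lt_0_compat; lra)).
    rewrite ln_div, ln_div in hterm by (try apply Rdiv_lt_0_compat; lra).
    rewrite ln_div by lra.
    unfold Rdiv in *. lra.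
Qed.

Lemma gibbs_inequality (l : list (R * R)) (s : R) :
  0 < s -> positive_pairs l -> sum_list (map fst l) = 1 ->
  sum_list (map snd l) <= s -> - ln s <= rel_entropy l.
Proof.
  intros hs hl hfst hsnd.
  assert (hge := rel_entropy_ge l s hs hl). rewrite hfst in hge.
  assert (sum_list (map snd l) / s <= 1).
  { unfold Rdiv. rewrite <- (Rinv_r s) by lra.
    apply Rmult_le_compat_r; [left; apply Rinv_0_lt_compat|]; lra. }
  lra.
Qed.

Lemma rel_entropy_const_ratio (l : list (R * R)) (r : R) :
  Forall (fun '(x, y) => x / y = r) l ->
  rel_entropy l = sum_list (map fst l) * ln r.
Proof.
  intros hl. unfold rel_entropy, sum_list.
  induction hl as [|[x y] l hxy _ IH]; simpl.
  - ring.
  - rewrite IH, hxy. ring.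
Qed.

Definition site_terms (rp : R) : list (R * R) := [(rp, 1); (rho_minus rp, 1)].

Definition bond_terms (beta mpp rp : R) : list (R * R) :=
  [(mpp, exp (- beta) * rp ^ 2);
   (2 * mu_pm mpp rp, 2 * (rp * rho_minus rp));
   (mu_mm mpp rp, exp (- beta) * rho_minus rp ^ 2)].

Lemma inQ_rho_pos (mpp rp : R) : inQ mpp rp -> 0 < rp /\ 0 < rho_minus rp.
Proof. unfold inQ, mu_pm, mu_mm, rho_minus. lra. Qed.

Lemma site_terms_pos (mpp rp : R) : inQ mpp rp -> positive_pairs (site_terms rp).
Proof.
  intros hQ. apply inQ_rho_pos in hQ. unfold positive_pairs, site_terms.
  repeat constructor; lra.
Qed.

Lemma bond_terms_pos (beta mpp rp : R) :
  inQ mpp rp -> positive_pairs (bond_terms beta mpp rp).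
Proof.
  intros hQ. destruct (inQ_rho_pos _ _ hQ) as [hp hq]. destruct hQ as [ha [hb hc]].
  assert (he := exp_pos (- beta)).
  unfold positive_pairs, bond_terms.
  repeat constructor; repeat apply Rmult_lt_0_compat; try apply pow_lt; lra.
Qed.

Lemma sum_fst_site_terms (rp : R) : sum_list (map fst (site_terms rp)) = 1.
Proof. simpl. unfold rho_minus. ring. Qed.

Lemma sum_fst_bond_terms (beta mpp rp : R) :
  sum_list (map fst (bond_terms beta mpp rp)) = 1.
Proof. simpl. unfold mu_pm, mu_mm. ring. Qed.

Lemma sum_snd_site_terms (rp : R) : sum_list (map snd (site_terms rp)) = 2.
Proof. simpl. ring. Qed.

Lemma sum_snd_bond_terms_le (beta mpp rp : R) :
  0 <= beta -> sum_list (map snd (bond_terms beta mpp rp)) <= (1 + exp (- beta)) / 2.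
Proof.
  intros hb. assert (he := exp_opp_le_1 beta hb). simpl. unfold rho_minus.
  set (e := exp (- beta)) in *.
  assert (hsq : 0 <= (1 - e) * (2 * rp - 1) ^ 2).
  { apply Rmult_le_pos; [lra | apply pow2_ge_0]. }
  replace (e * rp ^ 2 + (2 * (rp * (1 - rp)) + (e * (1 - rp) ^ 2 + 0)))
    with ((1 + e) / 2 - (1 - e) * (2 * rp - 1) ^ 2 / 2) by field.
  lra.
Qed.

Lemma ln_div_exp_opp (beta x y : R) :
  0 < x -> 0 < y -> ln (x / (exp (- beta) * y)) = ln (x / y) + beta.
Proof.
  intros hx hy. assert (he := exp_pos (- beta)).
  rewrite !ln_div, ln_mult, ln_exp by (try apply Rmult_lt_0_compat; lra). ring.
Qed.

Lemma psi_rel_entropy (d : nat) (beta mpp rp : R) :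
  inQ mpp rp ->
  psi d beta mpp rp =
  - rel_entropy (site_terms rp) - INR d / 2 * rel_entropy (bond_terms beta mpp rp).
Proof.
  intros hQ. destruct (inQ_rho_pos _ _ hQ) as [hp hq]. destruct hQ as [ha [hb hc]].
  unfold psi, rel_entropy, sum_list, site_terms, bond_terms; cbn [map fold_right].
  rewrite !Rdiv_1_r, !ln_div_exp_opp by (try apply pow_lt; lra).
  replace (2 * mu_pm mpp rp / (2 * (rp * rho_minus rp)))
    with (mu_pm mpp rp / (rp * rho_minus rp)) by (field; lra).
  unfold mu_mm. ring.
Qed.

Lemma psi_le (d : nat) (beta mpp rp : R) :
  0 <= beta -> inQ mpp rp ->
  psi d beta mpp rp <= (1 - INR d / 2) * ln 2 + INR d / 2 * ln (1 + exp (- beta)).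
Proof.
  intros hb hQ. assert (he := exp_pos (- beta)).
  assert (hD : 0 <= INR d / 2) by (assert (h := pos_INR d); lra).
  assert (hsite : - ln 2 <= rel_entropy (site_terms rp)).
  { apply gibbs_inequality; [lra | apply (site_terms_pos _ _ hQ) | apply sum_fst_site_terms |].
    rewrite sum_snd_site_terms. lra. }
  assert (hbond : - ln ((1 + exp (- beta)) / 2) <= rel_entropy (bond_terms beta mpp rp)).
  { apply gibbs_inequality; [lra | apply (bond_terms_pos beta _ _ hQ) |
      apply sum_fst_bond_terms | apply sum_snd_bond_terms_le, hb]. }
  rewrite ln_div in hbond by lra.
  apply Rmult_le_compat_l with (r := INR d / 2) in hbond; [|exact hD].
  rewrite psi_rel_entropy by exact hQ. lra.
Qed.

Lemma inQ_symmetric_point (beta : R) :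
  inQ (exp (- beta) / (2 * (1 + exp (- beta)))) (1 / 2).
Proof.
  assert (he := exp_pos (- beta)). set (e := exp (- beta)) in *.
  unfold inQ, mu_pm, mu_mm.
  replace (1 / 2 - e / (2 * (1 + e))) with (1 / (2 * (1 + e))) by (field; lra).
  replace (1 + e / (2 * (1 + e)) - 2 * (1 / 2)) with (e / (2 * (1 + e))) by (field; lra).
  repeat split; apply Rdiv_lt_0_compat; lra.
Qed.

Lemma psi_symmetric_point (d : nat) (beta : R) :
  psi d beta (exp (- beta) / (2 * (1 + exp (- beta)))) (1 / 2) =
  (1 - INR d / 2) * ln 2 + INR d / 2 * ln (1 + exp (- beta)).
Proof.
  rewrite psi_rel_entropy by apply inQ_symmetric_point.
  assert (he := exp_pos (- beta)). set (e := exp (- beta)) in *.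
  rewrite (rel_entropy_const_ratio (site_terms (1 / 2)) (1 / 2)),
    (rel_entropy_const_ratio (bond_terms beta (e / (2 * (1 + e))) (1 / 2)) (2 / (1 + e))),
    sum_fst_site_terms, sum_fst_bond_terms.
  - rewrite !ln_div, ln_1 by lra. ring.
  - unfold bond_terms, mu_pm, mu_mm, rho_minus. fold e.
    repeat constructor; field; lra.
  - unfold site_terms, rho_minus. repeat constructor; field.
Qed.

Theorem corollary6p6 (d : nat) (beta : R) (hd : (3 <= d)%nat) (hb : 0 < beta) :
  let m0 := exp (- beta) / (2 * (1 + exp (- beta))) in
  inQ m0 (1 / 2) /\
  (forall mpp rp : R, inQ mpp rp -> psi d beta mpp rp <= psi d beta m0 (1 / 2)) /\
  psi d beta m0 (1 / 2) = (1 - INR d / 2) * ln 2 + INR d / 2 * ln (1 + exp (- beta)).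
Proof.
  intros m0. split; [|split].
  - apply inQ_symmetric_point.
  - intros mpp rp hQ. unfold m0. rewrite psi_symmetric_point.
    apply psi_le; [lra | exact hQ].
  - apply psi_symmetric_point.
Qed.
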